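(* For every integer $i>1$, $\mathfrak{L}(\mathrm{rtDBVASIZE}(i-1))\subsetneq\mathfrak{L}(\mathrm{rtDBVASIZE}(i))$.
   Context: A real-time deterministic blind vector automaton of dimension $k$ ($\mathrm{rtDBVA}(k)$) is a 6-tuple $(Q,\Sigma,\delta,q_0,Q_a,v)$ with finite state set $Q$, initial state $q_0$, accept states $Q_a$, initial row vector $v\in\mathbb{Q}^k$ (freely chosen), and $\delta:Q\times(\Sigma\cup\{\cent,\$\})\to Q\times S$, $S$ the set of $k\times k$ rational matrices; the input $w$ is read as $\cent w\$$ left to right, one symbol per step, and $\delta(q,\sigma)=(q',M)$ means that in state $q$ reading $\sigma$ the machine goes to $q'$ and multiplies its row vector on the right by $M$. The input is accepted iff after processing $\$$ the state is in $Q_a$ and the first vector entry equals $1$. The size of an $m$-state $\mathrm{rtDBVA}(k)$ is $mk$. $\mathfrak{L}(\mathrm{rtDBVASIZE}(i))$ denotes the class of languages recognized by real-time deterministic blind vector automata of size $i$. *)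

From HB Require Import structures.
From mathcomp Require Import all_boot all_order all_algebra.
Set Implicit Arguments. Unset Strict Implicit. Unset Printing Implicit Defensive.
Import GRing.Theory Num.Theory.
Local Open Scope ring_scope.

Inductive tape_sym (Sigma : Type) : Type :=
| Cent : tape_sym Sigma
| Dollar : tape_sym Sigma
| Sym : Sigma -> tape_sym Sigma.
Arguments Cent {Sigma}.
Arguments Dollar {Sigma}.

(* A real-time deterministic blind vector automaton over alphabet Sigma,
   with finite state set Q and vector dimension k.+1 (dimension >= 1, so that
   the "first entry" exists). Vectors are row vectors multiplied on the right. *)
Record rtDBVA (Sigma : Type) (Q : finType) (k : nat) := RtDBVA {
  delta : Q -> tape_sym Sigma -> Q * 'M[rat]_k.+1;
  q0 : Q;
  acc : {pred Q};
  v0 : 'rV[rat]_k.+1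
}.

Definition dim_of Sigma (Q : finType) k (A : rtDBVA Sigma Q k) : nat := k.+1.

Definition size_of Sigma (Q : finType) k (A : rtDBVA Sigma Q k) : nat :=
  #|Q| * dim_of A.

Definition step Sigma (Q : finType) k (A : rtDBVA Sigma Q k)
  (c : Q * 'rV[rat]_k.+1) (s : tape_sym Sigma) : Q * 'rV[rat]_k.+1 :=
  let: (q, v) := c in
  let: (q', M) := delta A q s in (q', v *m M).

Definition run Sigma (Q : finType) k (A : rtDBVA Sigma Q k) (w : seq Sigma)
  : Q * 'rV[rat]_k.+1 :=
  foldl (step A) (q0 A, v0 A) (Cent :: map (@Sym Sigma) w ++ [:: Dollar]).

Definition accepts Sigma (Q : finType) k (A : rtDBVA Sigma Q k) (w : seq Sigma)
  : Prop :=
  let: (q, v) := run A w in (q \in acc A) /\ v ord0 ord0 = 1.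

Definition in_rtDBVASIZE (i : nat) (Sigma : finType) (L : seq Sigma -> Prop)
  : Prop :=
  exists (Q : finType) (k : nat) (A : rtDBVA Sigma Q k),
    size_of A = i /\ forall w, L w <-> accepts A w.

(* A machine of size n is simulated by a one-state machine of dimension n + 1. For strictness, the one-state machine of dimension p + 1 that reads a letter j as the
   vector of powers of j and then a set T of at most p letters as the coefficients of
   1 + prod_(t in T) (X - t) accepts the word j T exactly when j is in T. A machine of size
   p has at most p states, so p + 1 of (p + 1)^2 letters lead to one state; with T_b the set
   of these letters except the b-th, the vectors reached and the suffixes T_b form a fooling
   set whose (p + 1) x (p + 1) matrix is invertible, which needs dimension at least p + 1. *)

From mathcomp Require Import all_boot all_order all_algebra.
Set Implicit Arguments. Unset Strict Implicit. Unset Printing Implicit Defensive.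
Import GRing.Theory Num.Theory.
Local Open Scope ring_scope.

Lemma pigeonhole_fiber (T Q : finType) (f : T -> Q) n :
  (#|Q| * n < #|T|)%N -> exists q, (n < #|[set x | f x == q]|)%N.
Proof.
move=> hcard; apply/existsP; apply: contraLR hcard => /existsPn small; rewrite -leqNgt.
rewrite -sum1_card (partition_big f predT) //= -sum_nat_const.
apply: leq_sum => q _; rewrite sum1_card.
by have := small q; rewrite -leqNgt cardsE.
Qed.

Lemma unitmx_mulmx_leq (F : fieldType) m d (A : 'M[F]_(m, d)) (C : 'M[F]_(d, m)) :
  A *m C \in unitmx -> (m <= d)%N.
Proof.
by move=> hu; rewrite -(mxrank_unit hu); apply: leq_trans (mxrankM_maxl A C) (rank_leq_col A).
Qed.

Section Runs.
Variables (Sigma : Type) (Q : finType) (k : nat) (B : rtDBVA Sigma Q k).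

Lemma stepE q v s : step B (q, v) s = ((delta B q s).1, v *m (delta B q s).2).
Proof. by rewrite /step; case: (delta B q s). Qed.

Definition prefix_cfg (u : seq Sigma) : Q * 'rV[rat]_k.+1 :=
  foldl (step B) (q0 B, v0 B) (Cent :: map (@Sym Sigma) u).

Lemma run_prefix w : run B w = step B (prefix_cfg w) Dollar.
Proof. by rewrite /run -cat_cons foldl_cat. Qed.

Definition walk (q : Q) (t : seq (tape_sym Sigma)) : Q * 'M[rat]_k.+1 :=
  foldl (fun c s => ((delta B c.1 s).1, c.2 *m (delta B c.1 s).2)) (q, 1%:M) t.

Lemma foldl_step_walk q v t :
  foldl (step B) (q, v) t = ((walk q t).1, v *m (walk q t).2).
Proof.
rewrite /walk -[in LHS](mulmx1 v); elim: t q (1%:M) => [|s t IH] q M //=.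
by case: (delta B q s) => q' M'; rewrite -mulmxA IH.
Qed.

Definition final_walk (q : Q) (y : seq Sigma) : Q * 'M[rat]_k.+1 :=
  walk q (map (@Sym Sigma) y ++ [:: Dollar]).

Lemma accepts_cat u y : accepts B (u ++ y) <->
  ((final_walk (prefix_cfg u).1 y).1 \in acc B /\
   ((prefix_cfg u).2 *m (final_walk (prefix_cfg u).1 y).2) 0 0 = 1).
Proof.
rewrite /accepts /run map_cat -catA -cat_cons foldl_cat -/(prefix_cfg u).
by case: (prefix_cfg u) => q v; rewrite foldl_step_walk.
Qed.

End Runs.

Section FoolingSet.
Variables (Sigma : Type) (Q : finType) (k : nat) (B : rtDBVA Sigma Q k).

Lemma fooling_set_leq_dim n (u y : 'I_n -> seq Sigma) (q : Q) :
  (1 < n)%N ->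
  (forall a, (prefix_cfg B (u a)).1 = q) ->
  (forall a, accepts B (u a)) ->
  (forall a b, accepts B (u a ++ y b) <-> a != b) ->
  (n <= k.+1)%N.
Proof.
move=> hn hq hu huy.
pose v a := (prefix_cfg B (u a)).2.
pose fin b := final_walk B q (y b).
pose M0 := (final_walk B q [::]).2.
have accE a b : accepts B (u a ++ y b) <-> (fin b).1 \in acc B /\ (v a *m (fin b).2) 0 0 = 1.
  by have := accepts_cat B (u a) (y b); rewrite hq.
have val_u a : (v a *m M0) 0 0 = 1.
  by have := (accepts_cat B (u a) [::]).1; rewrite cats0 hq => /(_ (hu a)) [].
have other (b : 'I_n) : exists a, a != b.
  pose a0 : 'I_n := Ordinal (ltnW hn); pose a1 : 'I_n := Ordinal hn.
  by case: (eqVneq b a0) => [->|hb]; [exists a1 | exists a0; rewrite eq_sym].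
have fin_acc b : (fin b).1 \in acc B.
  by have [a hab] := other b; have [] := (accE a b).1 ((huy a b).2 hab).
have val_off a b : a != b -> (v a *m (fin b).2) 0 0 = 1.
  by move=> hab; have [] := (accE a b).1 ((huy a b).2 hab).
have val_diag b : (v b *m (fin b).2) 0 0 != 1.
  by apply/eqP=> h; have := (huy b b).1 ((accE b b).2 (conj (fin_acc b) h)); rewrite eqxx.
(* Since every [u a] is accepted, [M0] turns each [v a] into the constant 1, so the fooling
   matrix [W *m Psi] is diagonal with nonzero diagonal. *)
pose W := \matrix_(a, r) v a 0 r : 'M[rat]_(n, k.+1).
pose Psi := \matrix_(r, b) ((fin b).2 r 0 - M0 r 0) : 'M[rat]_(k.+1, n).
apply: (@unitmx_mulmx_leq _ _ _ W Psi).
have -> : W *m Psi = diag_mx (\row_a ((v a *m (fin a).2) 0 0 - 1)).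
  apply/matrixP=> a b; rewrite !mxE.
  have -> : \sum_r W a r * Psi r b = (v a *m (fin b).2) 0 0 - (v a *m M0) 0 0.
    by rewrite !mxE -sumrB; apply: eq_bigr => r _; rewrite !mxE mulrBr.
  rewrite val_u; case: (eqVneq a b) => [->|hab]; first by rewrite mulr1n mxE.
  by rewrite val_off // subrr mulr0n.
by rewrite unitmxE det_diag unitfE; apply/prodf_neq0 => a _; rewrite mxE subr_eq0.
Qed.

End FoolingSet.

Section OneStateSimulation.
Variables (Sigma : Type) (Q : finType) (k : nat) (B : rtDBVA Sigma Q k).
Local Notation m := #|Q|.
Local Notation n := (#|Q| * k.+1)%N.

(* A configuration [(q, v)] is stored as the [m x (k+1)] matrix whose only nonzero row is
   row [q], equal to [v]; it is flattened by [mxvec] behind one extra coordinate that is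
   zero until the end marker and then receives the acceptance value. *)
Definition state_block (q : Q) (v : 'rV[rat]_k.+1) : 'M[rat]_(m, k.+1) :=
  delta_mx (enum_rank q) (0 : 'I_1) *m v.

Definition sim_vec (c : Q * 'rV[rat]_k.+1) : 'rV[rat]_(1 + n) :=
  row_mx 0 (mxvec (state_block c.1 c.2)).

Definition sim_trans_mx (s : tape_sym Sigma) : 'M[rat]_n :=
  \sum_q (lin_mulmx (delta_mx (enum_rank (delta B q s).1) (enum_rank q) : 'M[rat]_m)
          *m lin_mulmxr (delta B q s).2).

Definition sim_final_mx : 'M[rat]_(n, 1) :=
  \sum_q ((delta B q Dollar).1 \in acc B)%:R *:
     (lin_mul_row (delta_mx 0 (enum_rank q) : 'rV[rat]_m) *m col 0 (delta B q Dollar).2).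

Lemma mxvec_sim_trans_mx q v s :
  mxvec (state_block q v) *m sim_trans_mx s =
  mxvec (state_block (delta B q s).1 (v *m (delta B q s).2)).
Proof.
rewrite /sim_trans_mx mulmx_sumr (bigD1 q) //= big1 ?addr0.
  by rewrite mulmxA /lin_mulmx mul_vec_lin /lin_mulmxr mul_vec_lin /= /state_block
             !mulmxA mul_delta_mx.
move=> q' hq'; rewrite mulmxA /lin_mulmx mul_vec_lin /lin_mulmxr mul_vec_lin /=.
by rewrite /state_block !mulmxA mul_delta_mx_cond (inj_eq enum_rank_inj) (negbTE hq')
           mulr0n !mul0mx linear0.
Qed.

Lemma mxvec_sim_final_mx q v :
  (mxvec (state_block q v) *m sim_final_mx) 0 0 =
  ((delta B q Dollar).1 \in acc B)%:R * (v *m (delta B q Dollar).2) 0 0.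
Proof.
rewrite /sim_final_mx mulmx_sumr (bigD1 q) //= big1 ?addr0.
  rewrite -scalemxAr mulmxA mul_vec_lin_row /state_block mulmxA mul_delta_mx.
  rewrite -mulmxA -rowE row_id mxE; congr (_ * _).
  by rewrite !mxE; apply: eq_bigr => j _; rewrite mxE.
move=> q' hq'; rewrite -scalemxAr mulmxA mul_vec_lin_row /state_block mulmxA.
by rewrite mul_delta_mx_cond (inj_eq enum_rank_inj) (negbTE hq') mulr0n !mul0mx scaler0.
Qed.

Definition sim_mx (s : tape_sym Sigma) : 'M[rat]_(1 + n) :=
  if s is Dollar then block_mx 0 0 sim_final_mx 0 else block_mx 0 0 0 (sim_trans_mx s).

Definition simulation : rtDBVA Sigma unit n :=
  @RtDBVA Sigma unit n (fun _ s => (tt, sim_mx s)) tt predT (sim_vec (q0 B, v0 B)).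

Lemma size_simulation : size_of simulation = (size_of B).+1.
Proof. by rewrite /size_of /dim_of card_unit mul1n. Qed.

Lemma simulation_step c s : s <> Dollar ->
  step simulation (tt, sim_vec c) s = (tt, sim_vec (step B c s)).
Proof.
case: c => q v hs; rewrite !stepE /sim_vec /=.
have -> : sim_mx s = block_mx 0 0 0 (sim_trans_mx s) by case: s hs.
by rewrite (@mul_row_block _ 1 1 n 1 n) ?mulmx0 ?mul0mx ?add0r ?addr0 mxvec_sim_trans_mx.
Qed.

Lemma simulation_prefix w : prefix_cfg simulation w = (tt, sim_vec (prefix_cfg B w)).
Proof.
have sim_foldl c l : foldl (step simulation) (tt, sim_vec c) (map (@Sym Sigma) l) =
                     (tt, sim_vec (foldl (step B) c (map (@Sym Sigma) l))).
  elim: l c => [|x l IH] c //.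
  by have := IH (step B c (Sym x)); rewrite -simulation_step.
by have := sim_foldl (step B (q0 B, v0 B) Cent) w; rewrite -simulation_step.
Qed.

Lemma simulation_accepts w : accepts simulation w <-> accepts B w.
Proof.
rewrite /accepts !run_prefix simulation_prefix.
case: (prefix_cfg B w) => q v; rewrite !stepE /sim_vec /=.
rewrite (@mul_row_block _ 1 1 n 1 n) ?mulmx0 ?mul0mx ?add0r ?addr0.
have -> : (ord0 : 'I_(1 + n)) = lshift n ord0 by apply: val_inj.
rewrite (@row_mxEl _ 1 1 n) mxvec_sim_final_mx.
by case: ((delta B q Dollar).1 \in acc B); rewrite ?mul1r ?mul0r; split=> -[].
Qed.

End OneStateSimulation.

Lemma in_rtDBVASIZE_succ (i : nat) (Sigma : finType) (L : seq Sigma -> Prop) :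
  in_rtDBVASIZE i L -> in_rtDBVASIZE i.+1 L.
Proof.
case=> Q [k [B [<- hL]]]; exists unit, (#|Q| * k.+1)%N, (simulation B).
split=> [|w]; first exact: size_simulation.
by split=> [/hL|] /simulation_accepts // /hL.
Qed.

Section Membership.
Variables (N p : nat).

Definition mem_alphabet := ('I_N + {set 'I_N})%type.

Definition rat_of_ord (t : 'I_N) : rat := (t : nat)%:R.

Lemma rat_of_ord_inj : injective rat_of_ord.
Proof. by move=> a b /eqP; rewrite /rat_of_ord eqr_nat => /eqP /val_inj. Qed.

Definition membership_poly (T : {set 'I_N}) : {poly rat} :=
  1 + \prod_(a <- [seq rat_of_ord t | t <- enum T]) ('X - a%:P).

Lemma membership_polyE (T : {set 'I_N}) j : ((membership_poly T).[rat_of_ord j] == 1) = (j \in T).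
Proof.
rewrite hornerD hornerC -subr_eq0 addrC addKr -[_ == 0]/(root _ _).
by rewrite root_prod_XsubC (mem_map rat_of_ord_inj) mem_enum.
Qed.

Lemma size_membership_poly (T : {set 'I_N}) :
  (#|T| <= p)%N -> (size (membership_poly T) <= p.+1)%N.
Proof.
move=> hT; apply: leq_trans (size_add _ _) _.
by rewrite size_poly1 size_prod_XsubC size_map -cardE geq_max ltnS.
Qed.

Definition powers_mx (j : 'I_N) : 'M[rat]_p.+1 :=
  \matrix_(a, c) ((a == 0)%:R * rat_of_ord j ^+ c).

Definition coef_mx (T : {set 'I_N}) : 'M[rat]_p.+1 :=
  \matrix_(r, c) ((c == 0)%:R * (membership_poly T)`_r).

Definition membership_dbva : rtDBVA mem_alphabet unit p :=
  @RtDBVA mem_alphabet unit p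
    (fun _ s => (tt, match s with
                     | Sym (inl j) => powers_mx j
                     | Sym (inr T) => coef_mx T
                     | _ => 1%:M end))
    tt predT (delta_mx 0 0).

Lemma size_membership_dbva : size_of membership_dbva = p.+1.
Proof. by rewrite /size_of /dim_of card_unit mul1n. Qed.

Lemma membership_accepts_letter j : accepts membership_dbva [:: inl j].
Proof. by rewrite /accepts /run /= !mulmx1 -rowE !mxE eqxx mul1r expr0. Qed.

Lemma membership_accepts_pair j (T : {set 'I_N}) :
  (#|T| <= p)%N -> accepts membership_dbva [:: inl j; inr T] <-> j \in T.
Proof.
move=> hT; rewrite -membership_polyE /accepts /run /= !mulmx1 -rowE.
have -> : (row 0 (powers_mx j) *m coef_mx T) 0 0 = (membership_poly T).[rat_of_ord j].
  rewrite (horner_coef_wide _ (size_membership_poly hT)) mxE; apply: eq_bigr => r _.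
  by rewrite !mxE !eqxx !mul1r mulrC.
by split=> [[_ /eqP]|/eqP].
Qed.

End Membership.


Section LowerBound.
Variables (N p : nat).
Hypotheses (p_gt0 : (0 < p)%N) (pp_lt_N : (p * p < N)%N).

Lemma membership_not_in_rtDBVASIZE : ~ in_rtDBVASIZE p (accepts (membership_dbva N p)).
Proof.
case=> Q [k [B [hsize hB]]]; rewrite /size_of /dim_of in hsize.
have hQ : (#|Q| <= p)%N by rewrite -hsize leq_pmulr.
have hk : (k.+1 <= p)%N.
  by rewrite -hsize leq_pmull //; apply/card_gt0P; exists (q0 B).
have [q hq] : exists q, (p < #|[set j | (prefix_cfg B [:: inl j]).1 == q]|)%N.
  by apply: pigeonhole_fiber; rewrite card_ord; apply: leq_ltn_trans (leq_mul hQ _) pp_lt_N.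
pose g (a : 'I_p.+1) : 'I_N := enum_val (widen_ord hq a).
have g_inj : injective g by move=> a b /enum_val_inj /(congr1 val) /= /val_inj.
have g_q a : (prefix_cfg B [:: inl (g a)]).1 = q.
  by have := enum_valP (widen_ord hq a); rewrite inE => /eqP.
pose T b := g @: ~: [set b].
have card_T b : (#|T b| <= p)%N by rewrite card_imset // cardsC1 card_ord.
have g_in_T a b : (g a \in T b) = (a != b) by rewrite mem_imset // !inE.
suff : (p.+1 <= k.+1)%N by move/leq_trans/(_ hk); rewrite ltnn.
apply: (@fooling_set_leq_dim _ _ _ B p.+1 (fun a => [:: inl (g a)]) (fun b => [:: inr (T b)]) q).
- exact: p_gt0.
- exact: g_q.
- by move=> a; apply/hB/membership_accepts_letter.
- move=> a b; rewrite -g_in_T.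
  exact: iff_trans (iff_sym (hB _)) (membership_accepts_pair _ (card_T b)).
Qed.
End LowerBound.

Theorem theorem12 (i : nat) (hi : (1 < i)%N) :
  (forall (Sigma : finType) (L : seq Sigma -> Prop),
      in_rtDBVASIZE i.-1 L -> in_rtDBVASIZE i L) /\
  (exists (Sigma : finType) (L : seq Sigma -> Prop),
      in_rtDBVASIZE i L /\ ~ in_rtDBVASIZE i.-1 L).
Proof.
have succ_pred_i : i.-1.+1 = i by rewrite prednK // ltnW.
split=> [Sigma L|].
  by rewrite -[in X in _ -> X]succ_pred_i; apply: in_rtDBVASIZE_succ.
exists (mem_alphabet (i * i)), (accepts (membership_dbva (i * i) i.-1)); split.
  exists unit, i.-1, (membership_dbva (i * i) i.-1).
  by rewrite size_membership_dbva succ_pred_i.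
apply: membership_not_in_rtDBVASIZE; first by rewrite -ltnS succ_pred_i.
by rewrite -[in X in (_ < X * _)%N]succ_pred_i -[in X in (_ < _ * X)%N]succ_pred_i ltn_mul.
Qed.
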